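(* Let $n,t$ be positive integers and let $\mathcal{B}$ be a partition of $[n]=\{1,\ldots,n\}$ into $t$ nonempty blocks. For every nonempty $\mathcal{B}'\subseteq\mathcal{B}$ and every $\underline{i}\in[n]$, $$K[\underline{i},\mathcal{B}']=\min_{\underline{B}\in\mathcal{B}'}\Big\{\delta(\underline{i},\underline{B})+K[\omega(\underline{i},\underline{B})+_n1,\ \mathcal{B}'\setminus\{\underline{B}\}]\Big\},$$ where for the empty set one uses the convention $K[1,\varnothing]=0$ and $K[\underline{i},\varnothing]=1$ for $\underline{i}\neq1$. In particular, the minimum number of segments of a valid placement of $\mathcal{B}$, which is $K[1,\mathcal{B}]$, is computed by this recurrence.
   Context: Each block $B\in\mathcal{B}$ is written as an increasing sequence $\langle i_1<i_2<\cdots<i_\ell\rangle$ of its elements. Let $A(n)$ be the infinite sequence obtained by concatenating infinitely many copies of $\langle1,2,\ldots,n\rangle$. Each copy is called a segment, and the segments are numbered $1,2,3,\ldots$. A position of $A(n)$ is a pair $(\kappa,v)$ with segment index $\kappa\ge1$ and value $v\in[n]$. Positions are ordered lexicographically. For a nonempty $\mathcal{B}'\subseteq\mathcal{B}$, a placement of $\mathcal{B}'$ assigns to each element $x\in\bigcup_{B\in\mathcal{B}'}B$ a position $(\kappa_x,x)$ of $A(n)$, with distinct elements receiving distinct positions. A placement is valid if, for any two distinct blocks $B,C\in\mathcal{B}'$, no element of $B$ is placed strictly between the smallest and the largest positions occupied by elements of $C$. The number of segments used by a placement is the largest segment index $\kappa_x$ occurring in it. For $\underline{i}\in[n]$, $K[\underline{i},\mathcal{B}']$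 denotes the minimum number of segments used by a valid placement of $\mathcal{B}'$ in which every element is placed at a position $\ge(1,\underline{i})$. For $\underline{i}\in[n]$ and $B=\langle i_1<\cdots<i_\ell\rangle$: - If $\underline{i}\le i_1$ or $i_\ell<\underline{i}$, then $\omega(\underline{i},B)=i_\ell$. - Otherwise $i_l<\underline{i}\le i_{l+1}$ for a unique $l\in[\ell-1]$, and $\omega(\underline{i},B)=i_l$. $\delta(\underline{i},B)=0$ if $\underline{i}\le i_1$ and $i_\ell<n$, and $\delta(\underline{i},B)=1$ otherwise. $a+_n1$ denotes $a+1$ reduced modulo $n$, with result $0$ replaced by $n$; thus $a+_n1=a+1$ for $a<n$ and $n+_n1=1$. A valid placement of $\mathcal{B}$ corresponds to a solution of the Train Marshalling Problem: placing element $i$ in segment $\kappa$ means sending railcar $i$ to classification track $\kappa$. The minimum number of classification tracks therefore equals $K[1,\mathcal{B}]$. *)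

(* Elements of [n] = {1,...,n} are represented by x : 'I_n,
   with paper value  el x = x.+1  (so x = 0 represents element 1). *)
From Stdlib Require Import ClassicalEpsilon.
From mathcomp Require Import all_boot.
Set Implicit Arguments. Unset Strict Implicit. Unset Printing Implicit Defensive.

Section TMP.
Variable n : nat.

Definition el (x : 'I_n) : nat := x.+1.

Definition addn1_mod (a : nat) : nat :=
  let r := (a + 1) %% n in if r == 0 then n else r.

Definition bmax (B : {set 'I_n}) : nat := \max_(x in B) el x.

Definition omega (i : nat) (B : {set 'I_n}) : nat :=
  if [forall x in B, i <= el x] || (bmax B < i) then bmax B
  else \max_(x in B | el x < i) el x.

Definition delta (i : nat) (B : {set 'I_n}) : nat :=
  if [forall x in B, i <= el x] && (bmax B < n) then 0 else 1.

(* positions (segment, value), lexicographic strict / non-strict order *)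
Definition pos_lt (p q : nat * nat) : bool :=
  (p.1 < q.1) || ((p.1 == q.1) && (p.2 < q.2)).
Definition pos_le (p q : nat * nat) : bool :=
  (p.1 < q.1) || ((p.1 == q.1) && (p.2 <= q.2)).

(* a placement assigns the segment index kap x to element x, i.e. the position
   (kap x, el x); distinct elements get distinct positions automatically. *)
Definition pos (kap : 'I_n -> nat) (x : 'I_n) : nat * nat := (kap x, el x).

Definition valid_placement (Bs : {set {set 'I_n}}) (kap : 'I_n -> nat) : Prop :=
  (forall x, x \in cover Bs -> 1 <= kap x) /\
  (forall B C, B \in Bs -> C \in Bs -> B != C ->
     forall x, x \in B ->
       ~ (exists y1 y2, [/\ y1 \in C, y2 \in C,
                           pos_lt (pos kap y1) (pos kap x) &
                           pos_lt (pos kap x) (pos kap y2)])).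

Definition segments (Bs : {set {set 'I_n}}) (kap : 'I_n -> nat) : nat :=
  \max_(x in cover Bs) kap x.

Definition feasible (i : nat) (Bs : {set {set 'I_n}}) (k : nat) : Prop :=
  exists kap : 'I_n -> nat,
    [/\ valid_placement Bs kap,
        (forall x, x \in cover Bs -> pos_le (1, i) (pos kap x)) &
        segments Bs kap = k].

Definition feasibleb (i : nat) (Bs : {set {set 'I_n}}) (k : nat) : bool :=
  if excluded_middle_informative (feasible i Bs k) then true else false.

Lemma feasibleb_ex (i : nat) (Bs : {set {set 'I_n}}) :
  (exists k, feasible i Bs k) -> exists k, feasibleb i Bs k.
Proof.
case=> k Hk; exists k; rewrite /feasibleb.
by case: excluded_middle_informative.
Qed.

(* K[i, Bs] : minimum number of segments of a valid placement of Bs with all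
   positions >= (1, i).  (The fallback 0 is never used when Bs is a nonempty
   set of blocks, since a valid placement always exists.) *)
Definition Kseg (i : nat) (Bs : {set {set 'I_n}}) : nat :=
  match excluded_middle_informative (exists k, feasible i Bs k) with
  | left h => ex_minn (feasibleb_ex h)
  | right _ => 0
  end.

Definition Kext (i : nat) (Bs : {set {set 'I_n}}) : nat :=
  if Bs == set0 then (if i == 1 then 0 else 1) else Kseg i Bs.

End TMP.

(* Place first the block [Bu] containing the earliest occupied position of an
   optimal placement.  No element of another block can precede an element of
   [Bu] (it would lie between two elements of [Bu]), so [Bu] may be placed
   greedily: values >= i in segment 1, the others in segment 2.  Its last
   element then has value omega(i, Bu) and lies in segment
   delta(i, Bu) + [omega < n], so the remaining blocks form a placement
   starting at omega +_n 1, shifted by delta(i, Bu) segments.  Conversely,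
   prefixing such a shifted placement by the greedy placement of [Bu] is
   valid, which gives the reverse inequality. *)

From mathcomp Require Import all_boot zify.
From Stdlib Require Import ClassicalEpsilon.
Set Implicit Arguments. Unset Strict Implicit. Unset Printing Implicit Defensive.

Section Placements.
Variable n : nat.
Implicit Types (Bs : {set {set 'I_n}}) (Bu : {set 'I_n}) (kap : 'I_n -> nat).

Lemma el_gt0 (x : 'I_n) : 0 < el x.
Proof. by []. Qed.

Lemma el_le (x : 'I_n) : el x <= n.
Proof. exact: ltn_ord. Qed.

Lemma el_inj : injective (@el n).
Proof. by move=> x y [/val_inj]. Qed.

Lemma pos_lt_asym p q : pos_lt p q -> ~~ pos_lt q p.
Proof. case: p q => a v [b w]; rewrite /pos_lt /=; lia. Qed.

Lemma pos_ltW p q : pos_lt p q -> pos_le p q.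
Proof. case: p q => a v [b w]; rewrite /pos_lt /pos_le /=; lia. Qed.

Lemma pos_le_lt_trans p q r : pos_le p q -> pos_lt q r -> pos_lt p r.
Proof. case: p q r => a v [b w] [c u]; rewrite /pos_lt /pos_le /=; lia. Qed.

Lemma pos_le_fst p q : pos_le p q -> p.1 <= q.1.
Proof. case: p q => a v [b w]; rewrite /pos_le /=; lia. Qed.

Lemma pos_le_lt p q : p.2 != q.2 -> pos_le p q = pos_lt p q.
Proof. case: p q => a v [b w]; rewrite /pos_lt /pos_le /=; lia. Qed.

Lemma pos_lt_total p q : p.2 != q.2 -> pos_lt p q || pos_lt q p.
Proof. case: p q => a v [b w]; rewrite /pos_lt /=; lia. Qed.

Lemma pos_ltD2r d a b v w : pos_lt (a + d, v) (b + d, w) = pos_lt (a, v) (b, w).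
Proof. rewrite /pos_lt /=; lia. Qed.

Lemma pos_le_shift d v a u :
  d < a -> pos_le (d.+1, v) (a, u) = pos_le (1, v) (a - d, u).
Proof. rewrite /pos_le /=; lia. Qed.

Lemma pos_le_of_code_le a b v w : v <= n -> w <= n ->
  a * n.+1 + v <= b * n.+1 + w -> pos_le (a, v) (b, w).
Proof.
move=> vn wn; rewrite /pos_le /=; case: (ltngtP a b) => [//|ba|->]; last lia.
have : b.+1 * n.+1 <= a * n.+1 by rewrite leq_mul2r ba orbT.
lia.
Qed.

(* The segment of the first position [>= (1, i)] carrying the value [v]. *)
Definition first_seg (i v : nat) : nat := if i <= v then 1 else 2.

Lemma first_seg_gt0 i v : 0 < first_seg i v.
Proof. by rewrite /first_seg; case: ifP. Qed.

Lemma pos_le_first_seg i v : pos_le (1, i) (first_seg i v, v).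
Proof. rewrite /pos_le /first_seg /=; case: (leqP i v) => /=; lia. Qed.

Lemma first_seg_min i v k : 0 < k -> pos_le (1, i) (k, v) -> first_seg i v <= k.
Proof. rewrite /pos_le /first_seg /=; case: (leqP i v); lia. Qed.

Lemma mem_cover Bs B x : B \in Bs -> x \in B -> x \in cover Bs.
Proof. by move=> BBs; apply/subsetP/bigcup_sup. Qed.

Lemma cover_set0 : cover (set0 : {set {set 'I_n}}) = set0.
Proof. by apply/setP=> x; rewrite inE; apply/bigcupP=> -[B]; rewrite inE. Qed.

Lemma cover_setD1 Bs Bu : Bu \in Bs -> cover Bs = Bu :|: cover (Bs :\ Bu).
Proof. by move=> BuBs; rewrite /cover (big_setD1 Bu BuBs). Qed.

Lemma cover_setD1_sub Bs Bu : cover (Bs :\ Bu) \subset cover Bs.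
Proof. by apply/bigcupsP => B /setD1P[_ BBs]; apply/subsetP => x; apply: mem_cover. Qed.

Lemma notin_cover_setD1 Bs Bu x :
  trivIset Bs -> Bu \in Bs -> x \in cover (Bs :\ Bu) -> x \notin Bu.
Proof.
move=> /trivIsetP tI BuBs /bigcupP[B /setD1P[BBu BBs] xB].
by rewrite (disjointFr (tI _ _ BBs BuBs BBu) xB).
Qed.

Lemma valid_placement_set0 kap : valid_placement set0 kap.
Proof. by split=> [x|B C]; rewrite ?cover_set0 inE. Qed.

Lemma valid_placement_subset Bs Bs' kap :
  Bs' \subset Bs -> valid_placement Bs kap -> valid_placement Bs' kap.
Proof.
move=> sBs [kap_gt0 kap_sep]; split=> [x /bigcupP[B BBs' xB]|B C BBs' CBs'].
  by apply: kap_gt0; apply: (mem_cover (subsetP sBs _ BBs')).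
exact: kap_sep (subsetP sBs _ BBs') (subsetP sBs _ CBs').
Qed.

Lemma valid_placement_order Bs kap kap' :
  (forall x, x \in cover Bs -> 0 < kap' x) ->
  {in cover Bs &, forall x y,
     pos_lt (pos kap' x) (pos kap' y) = pos_lt (pos kap x) (pos kap y)} ->
  valid_placement Bs kap -> valid_placement Bs kap'.
Proof.
move=> kap'_gt0 ltE [_ kap_sep]; split=> // B C BBs CBs BC x xB.
move=> [y1 [y2 [y1C y2C lt1 lt2]]]; apply: (kap_sep B C BBs CBs BC x xB).
have xc := mem_cover BBs xB.
by exists y1, y2; rewrite -!ltE //; apply: mem_cover CBs _.
Qed.

Lemma valid_placement_shift Bs kap kap' d :
  (forall x, x \in cover Bs -> 0 < kap x /\ kap' x = kap x + d) ->
  valid_placement Bs kap' <-> valid_placement Bs kap.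
Proof.
move=> kap'E; have ltE : {in cover Bs &, forall x y,
    pos_lt (pos kap' x) (pos kap' y) = pos_lt (pos kap x) (pos kap y)}.
  by move=> x y xc yc; rewrite /pos (kap'E x xc).2 (kap'E y yc).2 pos_ltD2r.
split=> valid.
- by apply: valid_placement_order valid => [x /kap'E[]|x y xc yc]; rewrite ?ltE.
- by apply: valid_placement_order valid => // x /kap'E[h ->]; rewrite addn_gt0 h.
Qed.

Lemma valid_placement_first Bs Bu kap : Bu \in Bs ->
  (forall x, x \in Bu -> 0 < kap x) -> valid_placement (Bs :\ Bu) kap ->
  (forall x y, x \in Bu -> y \in cover (Bs :\ Bu) -> pos_lt (pos kap x) (pos kap y)) ->
  valid_placement Bs kap.
Proof.
move=> BuBs Bu_gt0 [rest_gt0 rest_sep] Bu_first.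
split=> [x|B C BBs CBs BC x xB [y1 [y2 [y1C y2C lt1 lt2]]]].
  by rewrite (cover_setD1 BuBs) => /setUP[/Bu_gt0|/rest_gt0].
have inD1 A : A \in Bs -> A != Bu -> A \in Bs :\ Bu by move=> ABs ABu; apply/setD1P.
have [BBu|BBu] := eqVneq B Bu.
  have CBu : C != Bu by rewrite -BBu eq_sym.
  have y1c := mem_cover (inD1 C CBs CBu) y1C.
  by have := pos_lt_asym lt1; rewrite Bu_first // -BBu.
have [CBu|CBu] := eqVneq C Bu.
  have xc := mem_cover (inD1 B BBs BBu) xB.
  by have := pos_lt_asym lt2; rewrite Bu_first // -CBu.
by apply: (rest_sep B C (inD1 B BBs BBu) (inD1 C CBs CBu) BC x xB); exists y1, y2.
Qed.

(* Otherwise [y] would lie strictly between [x0] and [z]. *)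
Lemma pos_lt_other_block Bs kap Bu C x0 z y : valid_placement Bs kap ->
  Bu \in Bs -> C \in Bs -> C != Bu -> x0 \in Bu -> z \in Bu -> y \in C ->
  y \notin Bu -> pos_le (pos kap x0) (pos kap y) -> pos_lt (pos kap z) (pos kap y).
Proof.
move=> [_ kap_sep] BuBs CBs CBu x0Bu zBu yC yBu x0y.
have neq_el u : u \in Bu -> (pos kap u).2 != (pos kap y).2.
  by move=> uBu; apply: contraNneq yBu => /el_inj <-.
have /orP[//|yz] := pos_lt_total (neq_el z zBu).
case: (kap_sep C Bu CBs BuBs CBu y yC); exists x0, z.
by rewrite -pos_le_lt // neq_el.
Qed.

Lemma exists_first_pos (S : {set 'I_n}) kap : S != set0 ->
  exists2 x0, x0 \in S & forall y, y \in S -> pos_le (pos kap x0) (pos kap y).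
Proof.
case/set0Pn=> x xS; pose code y := kap y * n.+1 + el y.
case: (@arg_minnP _ x (mem S) code xS) => x0 x0S x0_min.
by exists x0 => // y yS; apply: pos_le_of_code_le (el_le _) (el_le _) (x0_min y yS).
Qed.

Lemma bmax_mem Bu : Bu != set0 -> exists2 z, z \in Bu & el z = bmax Bu.
Proof.
rewrite -card_gt0 => /(eq_bigmax_cond (@el n))[z zBu zE].
by exists z; rewrite // /bmax zE.
Qed.

Lemma leq_bmax Bu x : x \in Bu -> el x <= bmax Bu.
Proof. exact: leq_bigmax_cond. Qed.

Variant omega_spec i Bu : nat -> nat -> Prop :=
  | OmegaAbove of (forall x, x \in Bu -> i <= el x) :
      omega_spec i Bu (bmax Bu) (n <= bmax Bu)
  | OmegaBelow (z : 'I_n) of z \in Bu & el z < i &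
      (forall x, x \in Bu -> el x < i -> el x <= el z) :
      omega_spec i Bu (el z) 1.

Lemma omegaP i Bu : Bu != set0 -> omega_spec i Bu (omega i Bu) (delta i Bu).
Proof.
move=> Bu0; have [zm zmBu zmE] := bmax_mem Bu0.
rewrite /omega /delta; case: (boolP [forall x in Bu, _]) => [/forall_inP above|].
  by have := OmegaAbove above; rewrite orTb; case: (ltnP (bmax Bu) n).
case/forall_inPn=> x0 x0Bu; rewrite -ltnNge => x0i /=.
have [bi|ib] := ltnP (bmax Bu) i.
  by rewrite -zmE; apply: OmegaBelow; rewrite ?zmE // => x /leq_bmax.
pose below := [pred x | (x \in Bu) && (el x < i)].
have : 0 < #|below| by apply/card_gt0P; exists x0; rewrite inE x0Bu.
case/(eq_bigmax_cond (@el n)) => z /andP[zBu zi] zE; rewrite zE.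
apply: OmegaBelow => // x xBu xi; rewrite -zE.
by apply: (@leq_bigmax_cond _ below); rewrite inE xBu.
Qed.

Lemma omega_greedy_last i Bu : Bu != set0 ->
  exists2 z, z \in Bu & el z = omega i Bu /\ forall x, x \in Bu ->
    pos_le (first_seg i (el x), el x) (first_seg i (el z), el z).
Proof.
move=> Bu0; case: omegaP => // [above|z zBu zi zmax].
  have [zm zmBu zmE] := bmax_mem Bu0; exists zm => //; split=> // x xBu.
  have := leq_bmax xBu; rewrite /first_seg !above // /pos_le /=; lia.
exists z => //; split=> // x xBu; rewrite /first_seg (leqNgt i (el z)) zi /pos_le /=.
by case: (leqP i (el x)) => // /(zmax x xBu) ->; rewrite orbT.
Qed.

Lemma addn1_mod_spec w : w <= n -> addn1_mod n w = if w < n then w.+1 else 1.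
Proof.
rewrite /addn1_mod addn1 leq_eqVlt => /predU1P[->|wn].
  by rewrite ltnn -addn1 modnDl; case: n => [|[|m]].
rewrite wn; move: wn; rewrite leq_eqVlt => /predU1P[->|wn]; first by rewrite modnn.
by rewrite modn_small.
Qed.

Lemma Kext_set0_addn1_mod w : 0 < w <= n -> @Kext n (addn1_mod n w) set0 = (w < n).
Proof.
case/andP=> w0 wn; rewrite /Kext eqxx addn1_mod_spec //.
by case: ltnP; case: w w0 wn.
Qed.

Lemma first_seg_omega i Bu : Bu != set0 -> i <= n ->
  first_seg i (omega i Bu) = delta i Bu + @Kext n (addn1_mod n (omega i Bu)) set0.
Proof.
move=> Bu0 iN; have [z _ [zE _]] := omega_greedy_last i Bu0.
rewrite Kext_set0_addn1_mod -?zE ?el_gt0 ?el_le // zE.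
case: omegaP => // [above|z' _ z'i _].
  have [zm zmBu <-] := bmax_mem Bu0.
  by rewrite /first_seg (above zm zmBu); case: ltnP.
by rewrite /first_seg leqNgt z'i (leq_trans z'i iN).
Qed.

Lemma pos_lt_omega i Bu b v : Bu != set0 -> i <= n -> 0 < v <= n ->
  pos_lt (first_seg i (omega i Bu), omega i Bu) (b, v) =
  pos_le ((delta i Bu).+1, addn1_mod n (omega i Bu)) (b, v).
Proof.
move=> Bu0 iN vn; have [z _ [zE _]] := omega_greedy_last i Bu0.
rewrite first_seg_omega // Kext_set0_addn1_mod -?zE ?el_gt0 ?el_le //.
rewrite addn1_mod_spec ?el_le // /pos_lt /pos_le /=.
have := el_le z; case: (ltnP (el z) n) => /=; lia.
Qed.

Definition bounded_placement i Bs kap k : Prop :=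
  [/\ valid_placement Bs kap,
      forall x, x \in cover Bs -> pos_le (1, i) (pos kap x) &
      forall x, x \in cover Bs -> kap x <= k].

Lemma bounded_placement_set0 i kap k : bounded_placement i set0 kap k.
Proof.
by split=> [|x|x]; rewrite ?cover_set0 ?inE //; apply: valid_placement_set0.
Qed.

Lemma bounded_placement_feasible i Bs kap k : bounded_placement i Bs kap k ->
  feasible i Bs (segments Bs kap) /\ segments Bs kap <= k.
Proof. by case=> valid start bound; split; [exists kap|apply/bigmax_leqP]. Qed.

Lemma feasible_bounded_placement i Bs k :
  feasible i Bs k -> exists kap, bounded_placement i Bs kap k.
Proof.
case=> kap [valid start <-]; exists kap; split=> // x xc.
exact: leq_bigmax_cond.
Qed.

Lemma feasiblebP i Bs k : reflect (feasible i Bs k) (feasibleb i Bs k).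
Proof. by rewrite /feasibleb; case: excluded_middle_informative; constructor. Qed.

Lemma Kseg_spec i Bs k : feasible i Bs k -> feasible i Bs (Kseg i Bs) /\ Kseg i Bs <= k.
Proof.
move=> fk; rewrite /Kseg; case: excluded_middle_informative => [ex|[]]; last by exists k.
by case: ex_minnP => m /feasiblebP fm m_min; split=> //; apply/m_min/feasiblebP.
Qed.

Lemma Kseg_le_bounded i Bs kap k : bounded_placement i Bs kap k -> Kseg i Bs <= k.
Proof.
case/bounded_placement_feasible=> fk seg_k.
by apply: leq_trans seg_k; case: (Kseg_spec fk).
Qed.

Lemma Kseg_bounded i Bs kap k : bounded_placement i Bs kap k ->
  exists kap', bounded_placement i Bs kap' (Kseg i Bs).
Proof.
case/bounded_placement_feasible=> fk _.
by apply: feasible_bounded_placement; case: (Kseg_spec fk).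
Qed.

Lemma Kext_bounded j Bs kap k : bounded_placement j Bs kap k ->
  exists kap', bounded_placement j Bs kap' (Kext j Bs).
Proof.
rewrite /Kext; case: eqP => [->|_]; last exact: Kseg_bounded.
by exists kap; apply: bounded_placement_set0.
Qed.

Lemma Kext_le_bounded j Bs kap k :
  bounded_placement j Bs kap k -> Kext j Bs <= maxn (@Kext n j set0) k.
Proof.
rewrite /Kext eqxx; case: eqP => [_ _|_ /Kseg_le_bounded]; first exact: leq_maxl.
by move/leq_trans; apply; apply: leq_maxr.
Qed.

Lemma Kext_set0_le j Bs kap k : set0 \notin Bs ->
  bounded_placement j Bs kap k -> @Kext n j set0 <= Kext j Bs.
Proof.
rewrite /Kext eqxx; have [-> //|/set0Pn[B BBs] Bs_set0 bounded] := eqVneq Bs set0.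
have /set0Pn[x xB] : B != set0 by apply: contraNneq Bs_set0 => <-.
have [kap' [[kap'_gt0 _] _ kap'_le]] := Kseg_bounded bounded.
have xc := mem_cover BBs xB.
by apply: leq_trans (kap'_le x xc); case: (j == 1); rewrite ?kap'_gt0.
Qed.

Lemma bounded_placement_cons i Bs Bu kapr k :
  trivIset Bs -> Bu \in Bs -> Bu != set0 -> i <= n ->
  bounded_placement (addn1_mod n (omega i Bu)) (Bs :\ Bu) kapr k ->
  exists kap, bounded_placement i Bs kap
    (delta i Bu + maxn (@Kext n (addn1_mod n (omega i Bu)) set0) k).
Proof.
move=> tI BuBs Bu0 iN [rvalid rstart rbound]; have kapr_gt0 := rvalid.1.
have [z zBu [zE z_last]] := omega_greedy_last i Bu0.
set d := delta i Bu; pose kap x := if x \in Bu then first_seg i (el x) else kapr x + d.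
have kapE y : y \in cover (Bs :\ Bu) -> kap y = kapr y + d.
  by move=> yc; rewrite /kap (negbTE (notin_cover_setD1 tI BuBs yc)).
have Bu_first x y : x \in Bu -> y \in cover (Bs :\ Bu) ->
    pos_lt (pos kap x) (pos kap y).
  move=> xBu yc; rewrite /pos (kapE y yc) /kap xBu.
  apply: pos_le_lt_trans (z_last x xBu) _.
  rewrite zE pos_lt_omega ?el_gt0 ?el_le // pos_le_shift ?addnK ?rstart //.
  by rewrite -[X in X < _]add0n ltn_add2r kapr_gt0.
exists kap; split.
- apply: valid_placement_first BuBs _ _ Bu_first => [x xBu|].
    by rewrite /kap xBu first_seg_gt0.
  apply: (valid_placement_shift (kap := kapr) (d := d) _).2 rvalid => y yc.
  by rewrite kapE // kapr_gt0.
- move=> x; rewrite (cover_setD1 BuBs) => /setUP[xBu|xc].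
    by rewrite /pos /kap xBu pos_le_first_seg.
  apply/pos_ltW/(pos_le_lt_trans _ (Bu_first z x zBu xc)).
  by rewrite /pos /kap zBu pos_le_first_seg.
- move=> x; rewrite (cover_setD1 BuBs) => /setUP[xBu|xc].
    rewrite /kap xBu; apply: leq_trans (pos_le_fst (z_last x xBu)) _.
    by rewrite /= zE first_seg_omega // leq_add2l leq_maxl.
  by rewrite kapE // addnC leq_add2l; apply: leq_trans (rbound x xc) (leq_maxr _ _).
Qed.

Lemma bounded_placement_uncons i Bs kap K :
  trivIset Bs -> set0 \notin Bs -> Bs != set0 -> i <= n ->
  bounded_placement i Bs kap K ->
  exists2 Bu, Bu \in Bs & exists2 kapr,
    bounded_placement (addn1_mod n (omega i Bu)) (Bs :\ Bu) kapr (K - delta i Bu) &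
    delta i Bu + @Kext n (addn1_mod n (omega i Bu)) set0 <= K.
Proof.
move=> tI Bs_set0 /set0Pn[B BBs] iN [valid start bound].
have /set0Pn[x xB] : B != set0 by apply: contraNneq Bs_set0 => <-.
have cover0 : cover Bs != set0 by apply/set0Pn; exists x; apply: mem_cover BBs xB.
have [x0 /bigcupP[Bu BuBs x0Bu] x0_first] := exists_first_pos kap cover0.
exists Bu => //; have Bu0 : Bu != set0 by apply/set0Pn; exists x0.
have [z zBu [zE _]] := omega_greedy_last i Bu0; set d := delta i Bu.
have zc := mem_cover BuBs zBu.
have z_seg : first_seg i (el z) <= kap z := first_seg_min (valid.1 z zc) (start z zc).
have after y : y \in cover (Bs :\ Bu) ->
    d < kap y /\ pos_le (1, addn1_mod n (omega i Bu)) (kap y - d, el y).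
  move=> yc; have /bigcupP[C /setD1P[CBu CBs] yC] := yc.
  have z_before_y := pos_lt_other_block valid BuBs CBs CBu x0Bu zBu yC
    (notin_cover_setD1 tI BuBs yc) (x0_first y (mem_cover CBs yC)).
  have : pos_le (first_seg i (el z), el z) (pos kap z).
    by rewrite /pos_le /= leqnn andbT orbC -leq_eqVlt.
  move/pos_le_lt_trans/(_ z_before_y).
  rewrite zE pos_lt_omega ?el_gt0 ?el_le // => h.
  by have dy := pos_le_fst h; rewrite -pos_le_shift.
exists (fun y => kap y - d); last first.
  by rewrite -first_seg_omega // -zE; apply: leq_trans z_seg (bound z zc).
split.
- apply: (valid_placement_shift (kap' := kap) (d := d) _).1.
    by move=> y /after[dy _]; rewrite subn_gt0 subnK // ltnW.
  exact: valid_placement_subset (subsetDl Bs [set Bu]) valid.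
- by move=> y /after[].
- move=> y yc; rewrite leq_sub2r // bound //.
  exact: (subsetP (cover_setD1_sub Bs Bu)).
Qed.

Lemma addn1_mod_omega_le i Bu : Bu != set0 -> addn1_mod n (omega i Bu) <= n.
Proof.
move=> Bu0; have [z _ [<- _]] := omega_greedy_last i Bu0.
rewrite addn1_mod_spec ?el_le //; case: ltnP => // _.
by apply: leq_ltn_trans (ltn_ord z).
Qed.

Lemma exists_bounded_placement Bs : trivIset Bs -> set0 \notin Bs ->
  forall j, j <= n -> exists kap k, bounded_placement j Bs kap k.
Proof.
move cardBs: #|Bs| => m; elim: m Bs cardBs => [|m IH] Bs cardBs tI Bs_set0 j jn.
  move/eqP: cardBs; rewrite cards_eq0 => /eqP->.
  by exists (fun _ => 0), 0; apply: bounded_placement_set0.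
have /card_gt0P[Bu BuBs] : 0 < #|Bs| by rewrite cardBs.
have Bu0 : Bu != set0 by apply: contraNneq Bs_set0 => <-.
have [||||kapr [k br]] := IH (Bs :\ Bu) _ _ _ (addn1_mod n (omega j Bu)).
- by move: cardBs; rewrite (cardsD1 Bu) BuBs => -[].
- exact: trivIsetS (subsetDl _ _) tI.
- by rewrite in_setD1 negb_and Bs_set0 orbT.
- exact: addn1_mod_omega_le.
have [kap b] := bounded_placement_cons tI BuBs Bu0 jn br.
by exists kap, (delta j Bu + maxn (@Kext n (addn1_mod n (omega j Bu)) set0) k).
Qed.

Lemma Kseg_le_rec i Bs Bu : trivIset Bs -> set0 \notin Bs -> Bu \in Bs -> i <= n ->
  Kseg i Bs <= delta i Bu + Kext (addn1_mod n (omega i Bu)) (Bs :\ Bu).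
Proof.
move=> tI Bs_set0 BuBs iN; have Bu0 : Bu != set0 by apply: contraNneq Bs_set0 => <-.
have rest_set0 : set0 \notin Bs :\ Bu by rewrite in_setD1 negb_and Bs_set0 orbT.
have [kap0 [k0 b0]] := exists_bounded_placement (trivIsetS (subsetDl _ _) tI)
  rest_set0 (addn1_mod_omega_le i Bu0).
have [kapr br] := Kext_bounded b0.
have [kap] := bounded_placement_cons tI BuBs Bu0 iN br.
by rewrite (maxn_idPr (Kext_set0_le rest_set0 b0)); apply: Kseg_le_bounded.
Qed.

Lemma Kseg_ge_rec i Bs : trivIset Bs -> set0 \notin Bs -> Bs != set0 -> i <= n ->
  exists2 Bu, Bu \in Bs &
    delta i Bu + Kext (addn1_mod n (omega i Bu)) (Bs :\ Bu) <= Kseg i Bs.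
Proof.
move=> tI Bs_set0 Bs0 iN; have [kap0 [k0 b0]] := exists_bounded_placement tI Bs_set0 iN.
have [kap b] := Kseg_bounded b0.
have [Bu BuBs [kapr br delta_le]] := bounded_placement_uncons tI Bs_set0 Bs0 iN b.
exists Bu => //; have := Kext_le_bounded br.
rewrite -(leq_add2l (delta i Bu)) => /leq_trans; apply.
rewrite addn_maxr geq_max delta_le subnKC ?leqnn //.
exact: leq_trans (leq_addr _ _) delta_le.
Qed.

End Placements.

Theorem mainTheorem2 (n t : nat) (B : {set {set 'I_n}}) :
  0 < n -> 0 < t ->
  partition B [set: 'I_n] -> #|B| = t ->
  forall (B' : {set {set 'I_n}}), B' \subset B -> B' != set0 ->
  forall i : nat, 1 <= i <= n ->
    (exists2 Bu, Bu \in B' &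
       Kseg i B' = delta i Bu + Kext (addn1_mod n (omega i Bu)) (B' :\ Bu)) /\
    (forall Bu, Bu \in B' ->
       Kseg i B' <= delta i Bu + Kext (addn1_mod n (omega i Bu)) (B' :\ Bu)).
Proof.
move=> _ _ /and3P[_ tI B_set0] _ B' sB' B'0 i /andP[_ iN].
have tI' := trivIsetS sB' tI.
have B'_set0 : set0 \notin B' by apply: contra B_set0; apply: (subsetP sB').
split; last by move=> Bu BuB'; apply: Kseg_le_rec.
have [Bu BuB' ge_rec] := Kseg_ge_rec tI' B'_set0 B'0 iN.
by exists Bu => //; apply/eqP; rewrite eqn_leq Kseg_le_rec.
Qed.
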